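(* For every $\lambda>\lambda^*$, $e(\lambda)\in I_\lambda\cap(-\infty,0)$; that is, $e(\lambda)>-1/(\gamma b^* )$, $G(e(\lambda))<\lambda/a^*$, and $e(\lambda)<0$.
   Context: Standing setup. Let $\gamma>0$; let $a_1,\dots,a_p>0$ with weights $\omega_i>0$, $\sum_i\omega_i=1$, and $b_1,\dots,b_n>0$ with weights $\pi_j>0$, $\sum_j\pi_j=1$; put $a^*=\max_i a_i$, $b^*=\max_j b_j$. Let $\mu$ be the limiting spectral distribution of $\mathbf{N}\mathbf{N}^T$ where $\mathbf{N}=\mathbf{A}^{1/2}\mathbf{G}\mathbf{B}^{1/2}$ is $k\times l$, $\mathbf{G}$ has iid mean-zero entries of variance $1/l$, $k/l\to\gamma$, and the spectral distributions of $\mathbf{A},\mathbf{B}$ converge to $\nu=\sum_i\omega_i\delta_{a_i}$ and $\underline{\nu}=\sum_j\pi_j\delta_{b_j}$. $\mu$ is a compactly supported probability measure on $[0,\infty)$; $\lambda^*>0$ is the right endpoint of its support, and $s(\lambda)=\int\frac{d\mu(t)}{t-\lambda}$ for $\lambda>\lambda^*$. Define $G(e)=\sum_{j=1}^n\frac{b_j\pi_j}{1+\gamma b_j e}$, $J=\{e: e>-1/(\gamma b^* )\}$, and for $\lambda>0$, $I_\lambda=\{e\in J: G(e)<\lambda/a^*\}$. Define $F(\lambda,e)=e-\sum_{i=1}^p\frac{a_i\omega_i}{a_iG(e)-\lambda}$. It is known (master equations) that there is a continuous (indeed smooth) real function $e(\lambda)$ on $(\lambda^*,\infty)$, never equal to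 a pole $-1/(\gamma b_j)$ of $G$ and with $a_iG(e(\lambda))\ne\lambda$, satisfying $s(\lambda)=\sum_{i=1}^p\frac{\omega_i}{a_iG(e(\lambda))-\lambda}$ and $e(\lambda)=\sum_{i=1}^p\frac{a_i\omega_i}{a_iG(e(\lambda))-\lambda}$, i.e. $F(\lambda,e(\lambda))=0$. *)

From Stdlib Require Import Reals Lra Lia.
Open Scope R_scope.

Fixpoint fsum (n : nat) (f : nat -> R) : R :=
  match n with
  | O => 0
  | S k => fsum k f + f k
  end.

Definition is_fmax (p : nat) (a : nat -> R) (m : R) : Prop :=
  (exists i, (i < p)%nat /\ a i = m) /\ (forall i, (i < p)%nat -> a i <= m).

(* A probability measure mu on R is represented by its distribution function
   Fd(x) = mu((-oo, x]): nondecreasing, right-continuous, limits 0 and 1.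
   Supported in [0, oo) and compactly supported. *)
Definition is_cdf (Fd : R -> R) : Prop :=
  (forall x y, x <= y -> Fd x <= Fd y) /\
  (forall x, forall eps, eps > 0 -> exists del, del > 0 /\
       forall y, x <= y < x + del -> Rabs (Fd y - Fd x) < eps) /\
  (forall x, 0 <= Fd x <= 1).

Definition supported_compact_nonneg (Fd : R -> R) : Prop :=
  (forall x, x < 0 -> Fd x = 0) /\ (exists M, Fd M = 1).

(* l is the right endpoint of the support of mu, i.e. sup supp mu
   = min { x | Fd x = 1 } (for a compactly supported measure). *)
Definition right_endpoint (Fd : R -> R) (l : R) : Prop :=
  Fd l = 1 /\ forall x, x < l -> Fd x < 1.

Definition RS_sum (Fd f : R -> R) (lo hi : R) (n : nat) : R :=
  let h := (hi - lo) / INR n in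
  fsum n (fun k => f (lo + INR k * h) *
                   (Fd (lo + INR (S k) * h) - Fd (lo + INR k * h))).

(* v = int f dmu, for f continuous on [lo,hi] and mu carried by (lo,hi]
   (Riemann-Stieltjes integral, limit of uniform-partition sums). *)
Definition RS_integral (Fd f : R -> R) (lo hi v : R) : Prop :=
  Un_cv (fun n => RS_sum Fd f lo hi (S n)) v.

Definition Gfun (gamma : R) (n : nat) (b pi : nat -> R) (e : R) : R :=
  fsum n (fun j => b j * pi j / (1 + gamma * b j * e)).

Definition Ffun (gamma : R) (p n : nat) (a w b pi : nat -> R) (lam e : R) : R :=
  e - fsum p (fun i => a i * w i / (a i * Gfun gamma n b pi e - lam)).

(* Writing g = G(e(lam)), the two master equations give the
   identity g e = 1 + lam s(lam) = int t/(t - lam) dmu(t), and this integral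
   lies in [-lstar/(lam - lstar), 0) (strictly negative because mu charges a
   neighbourhood of lstar > 0).  Hence e < 0, since e >= 0 would force g > 0.
   The two remaining bounds are proved by continuity: e never hits the pole
   -1/(gamma bstar) and astar G(e) never equals lam, so by the intermediate
   value theorem each of these quantities stays on one side for all larger
   lam; but for lam large the product bounds show that e is right of the pole
   and that astar G(e) < lam. *)

From Stdlib Require Import Reals Lra Lia.
Open Scope R_scope.

Lemma fsum_ext n f g : (forall k, (k < n)%nat -> f k = g k) -> fsum n f = fsum n g.
Proof.
  induction n as [|n IH]; simpl; intros H; [reflexivity|].
  rewrite IH by (intros; apply H; lia).
  rewrite H by lia; reflexivity.
Qed.

Lemma fsum_le n f g : (forall k, (k < n)%nat -> f k <= g k) -> fsum n f <= fsum n g.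
Proof.
  induction n as [|n IH]; simpl; intros H; [lra|].
  assert (fsum n f <= fsum n g) by (apply IH; intros; apply H; lia).
  specialize (H n ltac:(lia)); lra.
Qed.

Lemma fsum_plus n f g : fsum n (fun k => f k + g k) = fsum n f + fsum n g.
Proof. induction n as [|n IH]; simpl; [lra|]. rewrite IH; lra. Qed.

Lemma fsum_scal n c f : fsum n (fun k => c * f k) = c * fsum n f.
Proof. induction n as [|n IH]; simpl; [lra|]. rewrite IH; lra. Qed.

Lemma fsum_telescope n u : fsum n (fun k => u (S k) - u k) = u n - u O.
Proof. induction n as [|n IH]; simpl; [lra|]. rewrite IH; lra. Qed.

Lemma fsum_pos n f : (0 < n)%nat -> (forall k, (k < n)%nat -> 0 < f k) -> 0 < fsum n f.
Proof.
  induction n as [|n IH]; simpl; intros Hn H; [lia|].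
  assert (0 < f n) by (apply H; lia).
  destruct n as [|n]; [simpl; lra|].
  assert (0 < fsum (S n) f) by (apply IH; [lia | intros; apply H; lia]).
  lra.
Qed.

Lemma Un_cv_const c : Un_cv (fun _ => c) c.
Proof. intros eps Heps; exists O; intros k _; unfold Rdist; rewrite Rminus_diag, Rabs_R0; lra. Qed.

Lemma limit_ge u l c : (forall k, c <= u k) -> Un_cv u l -> c <= l.
Proof. intros H Hu; exact (Rle_cv_lim H (Un_cv_const c) Hu). Qed.

Lemma limit_le_vanishing u l A B :
  (forall k, u k <= A + B * / INR (S k)) -> Un_cv u l -> l <= A.
Proof.
  intros H Hu.
  assert (Hv : Un_cv (fun k => A + B * RinvN k) (A + B * 0)).
  { apply CV_plus; [apply Un_cv_const | apply CV_mult; [apply Un_cv_const | apply RinvN_cv]]. }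
  rewrite Rmult_0_r, Rplus_0_r in Hv.
  refine (Rle_cv_lim _ Hu Hv).
  intros k; simpl; rewrite <- S_INR; apply H.
Qed.

Definition mesh (lo hi : R) (N k : nat) : R := lo + INR k * ((hi - lo) / INR N).

Lemma RS_sum_mesh Fd f lo hi N :
  RS_sum Fd f lo hi N =
  fsum N (fun k => f (mesh lo hi N k) * (Fd (mesh lo hi N (S k)) - Fd (mesh lo hi N k))).
Proof. reflexivity. Qed.

Lemma mesh_succ lo hi N k : mesh lo hi N (S k) = mesh lo hi N k + (hi - lo) / INR N.
Proof. unfold mesh; rewrite S_INR; ring. Qed.

Lemma mesh_telescope (u : R -> R) lo hi N : (0 < N)%nat ->
  fsum N (fun k => u (mesh lo hi N (S k)) - u (mesh lo hi N k)) = u hi - u lo.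
Proof.
  intros HN; rewrite (fsum_telescope N (fun k => u (mesh lo hi N k))).
  assert (0 < INR N) by (apply lt_0_INR; lia).
  unfold mesh; simpl; f_equal; f_equal; field; lra.
Qed.

Lemma mesh_step_nonneg lo hi N : (0 < N)%nat -> lo <= hi -> 0 <= (hi - lo) / INR N.
Proof.
  intros HN Hlh; unfold Rdiv.
  apply Rmult_le_pos; [lra | left; apply Rinv_0_lt_compat, lt_0_INR; lia].
Qed.

Lemma mesh_bounds lo hi N k : (0 < N)%nat -> lo <= hi -> (k <= N)%nat ->
  lo <= mesh lo hi N k <= hi.
Proof.
  intros HN Hlh Hk.
  assert (HNpos : 0 < INR N) by (apply lt_0_INR; lia).
  assert (0 <= INR k <= INR N) by (split; [apply pos_INR | apply le_INR; lia]).
  pose proof (mesh_step_nonneg lo hi N HN Hlh).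
  unfold mesh; split; [nra|].
  replace hi with (lo + INR N * ((hi - lo) / INR N)) at 2 by (field; lra).
  nra.
Qed.

Lemma RS_sum_affine Fd f lo hi N al be : (0 < N)%nat ->
  RS_sum Fd (fun t => al + be * f t) lo hi N = al * (Fd hi - Fd lo) + be * RS_sum Fd f lo hi N.
Proof.
  intros HN; rewrite !RS_sum_mesh, <- (mesh_telescope Fd lo hi N HN), <- !fsum_scal, <- fsum_plus.
  apply fsum_ext; intros; ring.
Qed.

Lemma RS_sum_lower Fd f lo hi N c :
  (forall x y, x <= y -> Fd x <= Fd y) -> (0 < N)%nat -> lo <= hi ->
  (forall t, lo <= t <= hi -> c <= f t) -> c * (Fd hi - Fd lo) <= RS_sum Fd f lo hi N.
Proof.
  intros Hmon HN Hlh Hf.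
  rewrite RS_sum_mesh, <- (mesh_telescope Fd lo hi N HN), <- fsum_scal.
  apply fsum_le; intros k Hk.
  pose proof (mesh_bounds lo hi N k HN Hlh ltac:(lia)).
  pose proof (mesh_bounds lo hi N (S k) HN Hlh ltac:(lia)).
  pose proof (mesh_step_nonneg lo hi N HN Hlh).
  assert (Fd (mesh lo hi N k) <= Fd (mesh lo hi N (S k))) by (apply Hmon; rewrite mesh_succ; lra).
  apply Rmult_le_compat_r; [lra | apply Hf; lra].
Qed.

Section DecreasingIntegrand.
Variables (Fd f : R -> R) (lo hi m C : R).
Hypothesis Fd_mono : forall x y, x <= y -> Fd x <= Fd y.
Hypothesis Fd_neg : forall x, x < 0 -> Fd x = 0.
Hypothesis f_antitone : forall x, m <= x <= hi -> f x <= f m.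
Hypothesis f_nonpos : forall x, 0 <= x <= hi -> f x <= 0.
Hypothesis f_lipschitz : forall x y, lo <= x <= y -> y <= hi -> f x <= f y + C * (y - x).
Hypothesis m_range : 0 <= m <= hi.

(* One cell of the sum: [Rmax (Fd _) (Fd m)] only records the mass beyond [m]. *)
Lemma increment_bound x y : lo <= x <= y -> y <= hi ->
  f x * (Fd y - Fd x) <=
  f m * (Rmax (Fd y) (Fd m) - Rmax (Fd x) (Fd m)) + C * (y - x) * (Fd y - Fd x).
Proof.
  intros Hx Hy.
  assert (HdF : 0 <= Fd y - Fd x) by (pose proof (Fd_mono x y ltac:(lra)); lra).
  pose proof (f_lipschitz x y Hx Hy) as Hlip.
  enough (f y * (Fd y - Fd x) <= f m * (Rmax (Fd y) (Fd m) - Rmax (Fd x) (Fd m))) by nra.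
  destruct (Rlt_or_le y m) as [Hym | Hmy].
  - rewrite !Rmax_right by (apply Fd_mono; lra); rewrite Rminus_diag, Rmult_0_r.
    destruct (Rlt_or_le y 0) as [Hy0 | Hy0].
    + rewrite (Fd_neg y Hy0), (Fd_neg x ltac:(lra)); lra.
    + pose proof (f_nonpos y ltac:(lra)); nra.
  - rewrite (Rmax_left (Fd y)) by (apply Fd_mono; lra).
    pose proof (f_antitone y ltac:(lra)).
    pose proof (f_nonpos m ltac:(lra)).
    assert (0 <= Fd y - Rmax (Fd x) (Fd m) <= Fd y - Fd x).
    { pose proof (Rmax_l (Fd x) (Fd m)); pose proof (Fd_mono m y Hmy).
      split; [apply Rmax_case_strong; lra | lra]. }
    nra.
Qed.

Lemma RS_sum_upper N : (0 < N)%nat -> lo <= m ->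
  RS_sum Fd f lo hi N <= f m * (Fd hi - Fd m) + C * ((hi - lo) / INR N) * (Fd hi - Fd lo).
Proof.
  intros HN Hlm.
  assert (Hlh : lo <= hi) by lra.
  apply Rle_trans with (fsum N (fun k =>
      f m * (Rmax (Fd (mesh lo hi N (S k))) (Fd m) - Rmax (Fd (mesh lo hi N k)) (Fd m))
      + C * ((hi - lo) / INR N) * (Fd (mesh lo hi N (S k)) - Fd (mesh lo hi N k)))).
  - rewrite RS_sum_mesh; apply fsum_le; intros k Hk.
    pose proof (mesh_bounds lo hi N k HN Hlh ltac:(lia)).
    pose proof (mesh_bounds lo hi N (S k) HN Hlh ltac:(lia)).
    pose proof (mesh_step_nonneg lo hi N HN Hlh).
    replace ((hi - lo) / INR N) with (mesh lo hi N (S k) - mesh lo hi N k) by (rewrite mesh_succ; ring).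
    pose proof (mesh_succ lo hi N k).
    apply increment_bound; lra.
  - rewrite fsum_plus, !fsum_scal.
    rewrite (mesh_telescope (fun t => Rmax (Fd t) (Fd m))), (mesh_telescope Fd) by exact HN.
    rewrite Rmax_left, Rmax_right by (apply Fd_mono; lra); lra.
Qed.

End DecreasingIntegrand.

(** [stieltjes_kernel lam t = t / (t - lam)] is the integrand of
    [1 + lam * s(lam)]; on [t < lam] it is decreasing, nonpositive for
    [t >= 0], and Lipschitz on every [(-oo, hi]] with [hi < lam]. *)

Definition stieltjes_kernel (lam t : R) : R := 1 + lam * / (t - lam).

Section Kernel.
Variable lam : R.
Hypothesis lam_pos : 0 < lam.

Lemma kernel_eq t : t < lam -> stieltjes_kernel lam t = - (t / (lam - t)).
Proof. intros; unfold stieltjes_kernel; field; lra. Qed.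

Lemma kernel_antitone t1 t2 : t1 <= t2 < lam -> stieltjes_kernel lam t2 <= stieltjes_kernel lam t1.
Proof.
  intros Ht; unfold stieltjes_kernel.
  replace (/ (t1 - lam)) with (- / (lam - t1)) by (field; lra).
  replace (/ (t2 - lam)) with (- / (lam - t2)) by (field; lra).
  assert (/ (lam - t1) <= / (lam - t2)) by (apply Rinv_le_contravar; lra).
  nra.
Qed.

Lemma kernel_nonpos t : 0 <= t < lam -> stieltjes_kernel lam t <= 0.
Proof.
  intros Ht; rewrite kernel_eq by lra; unfold Rdiv.
  assert (0 < / (lam - t)) by (apply Rinv_0_lt_compat; lra); nra.
Qed.

Lemma kernel_neg t : 0 < t < lam -> stieltjes_kernel lam t < 0.
Proof.
  intros Ht; rewrite kernel_eq by lra; unfold Rdiv.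
  assert (0 < / (lam - t)) by (apply Rinv_0_lt_compat; lra); nra.
Qed.

Lemma kernel_lipschitz hi x y : x <= y -> y <= hi -> hi < lam ->
  stieltjes_kernel lam x <= stieltjes_kernel lam y + lam / (lam - hi) ^ 2 * (y - x).
Proof.
  intros Hxy Hy Hh; unfold stieltjes_kernel.
  replace (lam * / (x - lam)) with (lam * / (y - lam) + lam * (y - x) * / ((lam - x) * (lam - y)))
    by (field; lra).
  assert (/ ((lam - x) * (lam - y)) <= / (lam - hi) ^ 2) by (apply Rinv_le_contravar; nra).
  assert (0 <= lam * (y - x)) by nra.
  unfold Rdiv; nra.
Qed.

End Kernel.

(** Bounds on the Stieltjes transform beyond the support: for [lam > lstar],
    [1 + lam s(lam) = int t/(t-lam) dmu(t)] lies in [[-lstar/(lam-lstar), 0)];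
    it is strictly negative because [mu] charges [(lstar/2, lstar]]. *)
Lemma stieltjes_bounds Fd lstar lam lo sv :
  is_cdf Fd -> supported_compact_nonneg Fd -> right_endpoint Fd lstar ->
  0 < lstar -> lstar < lam -> lo < 0 ->
  RS_integral Fd (fun t => / (t - lam)) lo lstar sv ->
  - (lstar / (lam - lstar)) <= 1 + lam * sv < 0.
Proof.
  intros [Hmon [_ Hrange]] [Hneg _] [Hfull Hbelow] Hlpos Hlam Hlo Hcv.
  assert (Hmass : Fd lstar - Fd lo = 1) by (rewrite Hfull, (Hneg lo Hlo); ring).
  set (u k := 1 + lam * RS_sum Fd (fun t => / (t - lam)) lo lstar (S k)).
  assert (Hu : Un_cv u (1 + lam * sv)).
  { apply CV_plus; [apply Un_cv_const | apply CV_mult; [apply Un_cv_const | exact Hcv]]. }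
  assert (Hu_kernel : forall k, u k = RS_sum Fd (stieltjes_kernel lam) lo lstar (S k)).
  { intros k; unfold u, stieltjes_kernel.
    rewrite (RS_sum_affine Fd (fun t => / (t - lam))), Hmass by lia; ring. }
  split.
  - replace (- (lstar / (lam - lstar))) with (stieltjes_kernel lam lstar * (Fd lstar - Fd lo))
      by (rewrite Hmass, kernel_eq by lra; ring).
    apply (limit_ge u); [intros k | exact Hu].
    rewrite Hu_kernel; apply RS_sum_lower; [exact Hmon | lia | lra |].
    intros t Ht; apply kernel_antitone; lra.
  - set (m := lstar / 2).
    assert (Hm : 0 < m < lstar) by (unfold m; lra).
    assert (HFm : Fd m < 1) by (apply Hbelow; lra).
    assert (Hkm : stieltjes_kernel lam m < 0) by (apply kernel_neg; lra).
    apply Rle_lt_trans with (stieltjes_kernel lam m * (Fd lstar - Fd m)); [| rewrite Hfull; nra].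
    apply (limit_le_vanishing u _ _ (lam / (lam - lstar) ^ 2 * (lstar - lo))); [intros k | exact Hu].
    rewrite Hu_kernel.
    eapply Rle_trans.
    + apply (RS_sum_upper Fd (stieltjes_kernel lam) lo lstar m); auto; try lra; [| | | lia].
      * intros x Hx; apply kernel_antitone; lra.
      * intros x Hx; apply kernel_nonpos; lra.
      * intros x y Hx Hy; apply (kernel_lipschitz lam ltac:(lra) lstar); lra.
    + rewrite Hmass; unfold Rdiv; right; ring.
Qed.

Lemma Gfun_pos gamma n b pi x :
  0 < gamma -> (0 < n)%nat -> (forall j, (j < n)%nat -> 0 < b j) ->
  (forall j, (j < n)%nat -> 0 < pi j) -> 0 <= x -> 0 < Gfun gamma n b pi x.
Proof.
  intros Hg Hn Hb Hpi Hx; apply fsum_pos; [exact Hn|]; intros j Hj.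
  specialize (Hb j Hj); specialize (Hpi j Hj).
  apply Rdiv_lt_0_compat; [nra|].
  assert (0 <= gamma * b j * x) by (apply Rmult_le_pos; nra); lra.
Qed.

(* For [-1/(gamma bstar) < x < 0] every summand of [G] is dominated by the one
   with the largest [b j]. *)
Lemma Gfun_upper gamma n b pi bstar x :
  0 < gamma -> (forall j, (j < n)%nat -> 0 < b j <= bstar) ->
  (forall j, (j < n)%nat -> 0 < pi j) -> fsum n pi = 1 ->
  x < 0 -> 0 < 1 + gamma * bstar * x ->
  Gfun gamma n b pi x <= bstar / (1 + gamma * bstar * x).
Proof.
  intros Hg Hb Hpi Hpisum Hx Hd.
  replace (bstar / (1 + gamma * bstar * x))
    with (fsum n (fun j => bstar / (1 + gamma * bstar * x) * pi j))
    by (rewrite fsum_scal, Hpisum; ring).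
  apply fsum_le; intros j Hj.
  specialize (Hb j Hj); specialize (Hpi j Hj).
  assert (1 + gamma * bstar * x <= 1 + gamma * b j * x).
  { assert (gamma * b j <= gamma * bstar) by (apply Rmult_le_compat_l; lra); nra. }
  replace (bstar / (1 + gamma * bstar * x) * pi j) with (bstar * pi j / (1 + gamma * bstar * x))
    by (field; lra).
  unfold Rdiv.
  apply Rmult_le_compat; [nra | left; apply Rinv_0_lt_compat; lra | nra |].
  apply Rinv_le_contravar; lra.
Qed.

Lemma Gfun_continuous gamma n b pi x :
  (forall j, (j < n)%nat -> 1 + gamma * b j * x <> 0) -> continuity_pt (Gfun gamma n b pi) x.
Proof.
  unfold Gfun; induction n as [|n IH]; intros H; simpl.
  - apply continuity_pt_const; intros ? ?; reflexivity.
  - apply (continuity_pt_plus (fun e => fsum n (fun j => b j * pi j / (1 + gamma * b j * e)))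
                              (fun e => b n * pi n / (1 + gamma * b n * e))).
    + apply IH; intros; apply H; lia.
    + apply (continuity_pt_div (fun _ => b n * pi n) (fun e => 1 + gamma * b n * e)).
      * apply continuity_pt_const; intros ? ?; reflexivity.
      * apply (continuity_pt_plus (fun _ => 1) (fun e => gamma * b n * e)).
        -- apply continuity_pt_const; intros ? ?; reflexivity.
        -- apply (continuity_pt_scal id), derivable_continuous_pt, derivable_pt_id.
      * apply H; lia.
Qed.

Lemma resolvent_lower p a w astar g lam :
  (forall i, (i < p)%nat -> 0 < a i <= astar) -> (forall i, (i < p)%nat -> 0 < w i) ->
  fsum p w = 1 -> 0 <= g -> 2 * astar * g < lam ->
  - (2 * astar / lam) <= fsum p (fun i => a i * w i / (a i * g - lam)).
Proof.
  intros Ha Hw Hwsum Hg Hlam.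
  replace (- (2 * astar / lam)) with (fsum p (fun i => - (2 * astar / lam) * w i))
    by (rewrite fsum_scal, Hwsum; ring).
  apply fsum_le; intros i Hi.
  specialize (Ha i Hi); specialize (Hw i Hi).
  assert (Hlam0 : 0 < lam) by nra.
  assert (Hgap : lam / 2 < lam - a i * g) by nra.
  replace (a i * w i / (a i * g - lam)) with (- (a i * w i * / (lam - a i * g))) by (field; lra).
  replace (- (2 * astar / lam) * w i) with (- (astar * w i * / (lam / 2))) by (field; lra).
  apply Ropp_le_contravar, Rmult_le_compat; try nra.
  - left; apply Rinv_0_lt_compat; lra.
  - apply Rinv_le_contravar; lra.
Qed.

(* The algebraic link between the two master equations: with [g = G(e)],
   [g e = 1 + lam s]. *)
Lemma master_identity p a w g lam :
  fsum p w = 1 -> (forall i, (i < p)%nat -> a i * g <> lam) ->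
  g * fsum p (fun i => a i * w i / (a i * g - lam))
  = 1 + lam * fsum p (fun i => w i / (a i * g - lam)).
Proof.
  intros Hwsum Hne; rewrite <- Hwsum, <- !fsum_scal, <- fsum_plus.
  apply fsum_ext; intros i Hi.
  assert (a i * g - lam <> 0) by (apply Rminus_eq_contra, Hne, Hi).
  field; assumption.
Qed.

Lemma no_crossing f l c x0 x1 :
  (forall x, l < x -> continuity_pt f x) -> (forall x, l < x -> f x <> c) ->
  l < x0 -> x0 <= x1 -> f x0 < c -> f x1 < c.
Proof.
  intros Hcont Hne Hx0 Hx01 Hf0.
  destruct (Rtotal_order (f x1) c) as [Hlt | [Heq | Hgt]]; [exact Hlt | | exfalso].
  - exfalso; apply (Hne x1); [lra | exact Heq].
  - destruct (Ranalysis5.IVT_interv (fun x => f x - c) x0 x1) as [z [Hz Hfz]]; try lra.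
    + intros x Hx; apply (continuity_pt_minus f (fun _ => c)).
      * apply Hcont; lra.
      * apply continuity_pt_const; intros ? ?; reflexivity.
    + destruct (Rle_lt_or_eq_dec x0 x1 Hx01) as [|Heq]; [lra | subst; lra].
    + apply (Hne z); lra.
Qed.

Lemma pole_sign B x : 0 < B -> (- / B < x <-> 0 < 1 + B * x).
Proof.
  intros HB; assert (HBinv : B * / B = 1) by (field; lra).
  split; intros H; [|apply (Rmult_lt_reg_l B); [exact HB|]]; nra.
Qed.

Lemma exists_above x y z : exists t, x < t /\ y < t /\ z < t.
Proof.
  exists (Rmax (Rmax x y) z + 1).
  pose proof (Rmax_l (Rmax x y) z); pose proof (Rmax_r (Rmax x y) z).
  pose proof (Rmax_l x y); pose proof (Rmax_r x y); lra.
Qed.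

Section RootBranch.
Variables (gamma lstar astar bstar : R) (p n : nat) (a w b pi : nat -> R) (e : R -> R).
Hypothesis gamma_pos : 0 < gamma.
Hypothesis n_pos : (0 < n)%nat.
Hypothesis a_bounds : forall i, (i < p)%nat -> 0 < a i <= astar.
Hypothesis w_pos : forall i, (i < p)%nat -> 0 < w i.
Hypothesis w_sum : fsum p w = 1.
Hypothesis b_bounds : forall j, (j < n)%nat -> 0 < b j <= bstar.
Hypothesis pi_pos : forall j, (j < n)%nat -> 0 < pi j.
Hypothesis pi_sum : fsum n pi = 1.
Hypothesis astar_pos : 0 < astar.
Hypothesis bstar_pos : 0 < bstar.
Hypothesis e_cont : forall lam, lstar < lam -> continuity_pt e lam.
Hypothesis e_root : forall lam, lstar < lam ->
  e lam = fsum p (fun i => a i * w i / (a i * Gfun gamma n b pi (e lam) - lam)).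
Hypothesis e_product : forall lam, lstar < lam ->
  - (lstar / (lam - lstar)) <= Gfun gamma n b pi (e lam) * e lam < 0.
Hypothesis e_avoids_pole : forall lam, lstar < lam -> e lam <> - / (gamma * bstar).
Hypothesis e_avoids_edge : forall lam, lstar < lam -> astar * Gfun gamma n b pi (e lam) <> lam.

(* [e >= 0] would make [G(e) > 0] and hence [G(e) e >= 0]. *)
Lemma e_negative lam : lstar < lam -> e lam < 0.
Proof.
  intros Hlam; destruct (Rlt_or_le (e lam) 0) as [|He]; [assumption | exfalso].
  assert (0 < Gfun gamma n b pi (e lam)).
  { apply Gfun_pos; auto; intros j Hj; apply b_bounds, Hj. }
  pose proof (e_product lam Hlam); nra.
Qed.

Lemma product_far lam : lstar < lam -> 2 * lstar <= lam ->
  -1 <= Gfun gamma n b pi (e lam) * e lam /\ 0 < Gfun gamma n b pi (e lam).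
Proof.
  intros Hlam Hfar; pose proof (e_product lam Hlam); pose proof (e_negative lam Hlam).
  assert (lstar / (lam - lstar) <= 1).
  { apply (Rmult_le_reg_r (lam - lstar)); [lra|].
    unfold Rdiv; rewrite Rmult_assoc, Rinv_l; lra. }
  split; nra.
Qed.

(* For large [lam] the root cannot lie left of the pole [-1/(gamma bstar)]:
   there [0 < G(e) < gamma bstar] forces [e >= -2 astar / lam]. *)
Lemma e_not_left_of_pole_far lam : lstar < lam -> 2 * lstar <= lam ->
  2 * astar * (gamma * bstar) < lam -> ~ e lam < - / (gamma * bstar).
Proof.
  intros Hlam Hfar Hbig Hleft.
  set (B := gamma * bstar) in *; assert (HB : 0 < B) by (unfold B; nra).
  set (g := Gfun gamma n b pi (e lam)).
  destruct (product_far lam Hlam Hfar) as [Hprod Hg]; fold g in Hprod, Hg.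
  assert (Hpole : B * e lam < -1).
  { apply (Rmult_lt_compat_l B) in Hleft; [|exact HB].
    replace (B * - / B) with (-1) in Hleft by (field; lra); exact Hleft. }
  assert (HgB : g < B) by (pose proof (e_negative lam Hlam); nra).
  assert (Hlow : - (2 * astar / lam) <= e lam).
  { rewrite (e_root lam Hlam); fold g; apply resolvent_lower; auto; nra. }
  assert (Hlam0 : 0 < lam) by nra.
  assert (2 * astar / lam * lam = 2 * astar) by (field; lra).
  assert (B * (2 * astar / lam) < 1) by (apply (Rmult_lt_reg_r lam); nra).
  nra.
Qed.

(* If [e] were left of the pole at some [lam], it would stay there for all
   larger [lam] (no crossing), contradicting [e_not_left_of_pole_far]. *)
Lemma e_right_of_pole lam : lstar < lam -> - / (gamma * bstar) < e lam.
Proof.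
  intros Hlam.
  destruct (Rtotal_order (- / (gamma * bstar)) (e lam)) as [Hlt | [Heq | Hgt]]; [exact Hlt | |].
  - exfalso; apply (e_avoids_pole lam Hlam); symmetry; exact Heq.
  - destruct (exists_above lam (2 * lstar) (2 * astar * (gamma * bstar))) as [l1 [H1 [H2 H3]]].
    exfalso; apply (e_not_left_of_pole_far l1); try lra.
    apply (no_crossing e lstar _ lam l1); auto; lra.
Qed.

Lemma one_plus_pole_pos lam : lstar < lam -> 0 < 1 + gamma * bstar * e lam.
Proof.
  intros Hlam; apply pole_sign; [nra | apply e_right_of_pole, Hlam].
Qed.

(* For large [lam], [G(e) <= bstar (1 + gamma)], so [astar G(e) < lam]. *)
Lemma edge_far lam : lstar < lam -> 2 * lstar <= lam ->
  astar * bstar * (1 + gamma) < lam -> astar * Gfun gamma n b pi (e lam) < lam.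
Proof.
  intros Hlam Hfar Hbig.
  set (g := Gfun gamma n b pi (e lam)).
  destruct (product_far lam Hlam Hfar) as [Hprod Hg]; fold g in Hprod, Hg.
  pose proof (one_plus_pole_pos lam Hlam) as Hd.
  assert (Hup : g <= bstar / (1 + gamma * bstar * e lam)).
  { apply Gfun_upper; auto; apply e_negative, Hlam. }
  assert (g * (1 + gamma * bstar * e lam) <= bstar).
  { apply (Rmult_le_compat_r (1 + gamma * bstar * e lam)) in Hup; [|lra].
    replace (bstar / (1 + gamma * bstar * e lam) * (1 + gamma * bstar * e lam)) with bstar
      in Hup by (field; lra); exact Hup. }
  assert (0 <= gamma * bstar * (g * e lam + 1)) by (apply Rmult_le_pos; nra).
  assert (g <= bstar * (1 + gamma)) by nra.
  nra.
Qed.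

(* [lam |-> G(e(lam))] is continuous, since [e(lam)] avoids every pole of [G]. *)
Lemma G_comp_continuous lam : lstar < lam ->
  continuity_pt (fun l => Gfun gamma n b pi (e l)) lam.
Proof.
  intros Hlam.
  apply (continuity_pt_comp e (Gfun gamma n b pi)); [apply e_cont, Hlam|].
  apply Gfun_continuous; intros j Hj.
  pose proof (b_bounds j Hj); pose proof (e_negative lam Hlam); pose proof (one_plus_pole_pos lam Hlam).
  assert (gamma * b j <= gamma * bstar) by (apply Rmult_le_compat_l; lra).
  nra.
Qed.

(* [lam - astar G(e(lam))] is continuous and never vanishes; it is positive
   for large [lam] by [edge_far], hence positive everywhere. *)
Lemma G_below_edge lam : lstar < lam -> Gfun gamma n b pi (e lam) < lam / astar.
Proof.
  intros Hlam.
  set (k := fun l => l - astar * Gfun gamma n b pi (e l)).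
  enough (0 < k lam) by (unfold k in *; apply (Rmult_lt_reg_l astar); [lra|];
                         unfold Rdiv; rewrite <- Rmult_assoc, (Rmult_comm astar lam), Rmult_assoc, Rinv_r; lra).
  destruct (Rtotal_order (k lam) 0) as [Hneg | [Hzero | Hpos]]; [exfalso | exfalso | exact Hpos].
  - destruct (exists_above lam (2 * lstar) (astar * bstar * (1 + gamma))) as [l1 [H1 [H2 H3]]].
    assert (Hk : k l1 < 0).
    { apply (no_crossing k lstar 0 lam l1); auto; try lra.
      - intros x Hx; apply (continuity_pt_minus id (fun l => astar * Gfun gamma n b pi (e l))).
        + apply derivable_continuous_pt, derivable_pt_id.
        + apply (continuity_pt_scal (fun l => Gfun gamma n b pi (e l))), G_comp_continuous, Hx.
      - intros x Hx Hkx; apply (e_avoids_edge x Hx); unfold k in Hkx; lra. }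
    pose proof (edge_far l1 ltac:(lra) ltac:(lra) H3); unfold k in Hk; lra.
  - apply (e_avoids_edge lam Hlam); unfold k in Hzero; lra.
Qed.

End RootBranch.

Theorem proposition3p1
  (gamma : R) (p n : nat) (a w b pi : nat -> R) (astar bstar : R)
  (Fd : R -> R) (lstar : R) (s e : R -> R)
  (Hgamma : 0 < gamma)
  (Hp : (0 < p)%nat) (Hn : (0 < n)%nat)
  (Ha : forall i, (i < p)%nat -> 0 < a i)
  (Hw : forall i, (i < p)%nat -> 0 < w i)
  (Hwsum : fsum p w = 1)
  (Hb : forall j, (j < n)%nat -> 0 < b j)
  (Hpi : forall j, (j < n)%nat -> 0 < pi j)
  (Hpisum : fsum n pi = 1)
  (Hastar : is_fmax p a astar)
  (Hbstar : is_fmax n b bstar)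
  (* mu: compactly supported probability measure on [0,oo), right endpoint lstar > 0 *)
  (Hcdf : is_cdf Fd)
  (Hsupp : supported_compact_nonneg Fd)
  (Hlstar : right_endpoint Fd lstar)
  (Hlpos : 0 < lstar)
  (* s = Stieltjes transform of mu on (lstar, oo) *)
  (Hs : forall lam, lstar < lam ->
          RS_integral Fd (fun t => / (t - lam)) (-1) lstar (s lam))
  (* master equations: e continuous (smooth) on (lstar, oo) *)
  (He_cont : forall lam, lstar < lam -> continuity_pt e lam)
  (He_der : forall lam, lstar < lam -> derivable_pt e lam)
  (He_pole : forall lam j, lstar < lam -> (j < n)%nat -> e lam <> - / (gamma * b j))
  (He_ne : forall lam i, lstar < lam -> (i < p)%nat ->
             a i * Gfun gamma n b pi (e lam) <> lam)
  (He_s : forall lam, lstar < lam ->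
            s lam = fsum p (fun i => w i / (a i * Gfun gamma n b pi (e lam) - lam)))
  (He_F : forall lam, lstar < lam -> Ffun gamma p n a w b pi lam (e lam) = 0) :
  forall lam, lstar < lam ->
    - / (gamma * bstar) < e lam /\
    Gfun gamma n b pi (e lam) < lam / astar /\
    e lam < 0.
Proof.
  intros lam Hlam.
  destruct Hastar as [[i0 [Hi0 Hai0]] Hamax]; destruct Hbstar as [[j0 [Hj0 Hbj0]] Hbmax].
  assert (Ha_bounds : forall i, (i < p)%nat -> 0 < a i <= astar) by (intros; split; auto).
  assert (Hb_bounds : forall j, (j < n)%nat -> 0 < b j <= bstar) by (intros; split; auto).
  assert (Hapos : 0 < astar) by (rewrite <- Hai0; auto).
  assert (Hbpos : 0 < bstar) by (rewrite <- Hbj0; auto).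
  assert (Hroot : forall l, lstar < l ->
            e l = fsum p (fun i => a i * w i / (a i * Gfun gamma n b pi (e l) - l))).
  { intros l Hl; pose proof (He_F l Hl) as HF; unfold Ffun in HF; lra. }
  assert (Hprod : forall l, lstar < l ->
            - (lstar / (l - lstar)) <= Gfun gamma n b pi (e l) * e l < 0).
  { intros l Hl; rewrite (Hroot l Hl) at 2 4.
    rewrite master_identity, <- (He_s l Hl) by (auto; intros; apply He_ne; auto).
    apply stieltjes_bounds with Fd (-1); auto; lra. }
  assert (Hpole : forall l, lstar < l -> e l <> - / (gamma * bstar))
    by (intros; rewrite <- Hbj0; auto).
  assert (Hedge : forall l, lstar < l -> astar * Gfun gamma n b pi (e l) <> l)
    by (intros; rewrite <- Hai0; auto).
  split; [|split].
  - apply (e_right_of_pole gamma lstar astar bstar p n a w b pi e); auto.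
  - apply (G_below_edge gamma lstar astar bstar p n a w b pi e); auto.
  - apply (e_negative gamma lstar bstar n b pi e); auto.
Qed.
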